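(* Let $L,\pi_L,\theta,a$ be as below (so $a^{-1}$ also satisfies the hypothesis). Then $$M(T,\theta,a)=-\theta(-1)\,\omega^{-1}(-1)\,M(T,\theta,a^{-1}).$$
   Context: Let $p\ge5$ be prime; $\zeta_{p^{n+1}}$ compatible primitive $p^{n+1}$-th roots of unity, $K_n=\mathbb Q_p(\zeta_{p^{n+1}})$, $\Gamma_n=\mathrm{Gal}(K_n/K_0)$, $\gamma_0\in\varprojlim\Gamma_n$ acting by $\zeta\mapsto\zeta^{1+p}$. For $a\in\mathbb Z_p^*$: $\omega(a)$ Teichmüller, $\langle a\rangle=a/\omega(a)$, $\gamma_n(a)\in\Gamma_n$: $\zeta_{p^{n+1}}\mapsto\zeta_{p^{n+1}}^{\langle a\rangle}$. $\widehat\Delta$ is the group of characters $\theta:(\mathbb Z/p)^*\cong\Delta\to\mu_{p-1}$ (powers of $\omega$), $\theta(k)$ for $p\nmid k$. Let $L$ be a finite extension of $\mathbb Q_p$, $O_L$ its integers, $\pi_L$ a uniformizer, $\Lambda_L=O_L[[T]]\cong\varprojlim O_L[\Gamma_n]$ with $T\leftrightarrow\gamma_0-1$. For $\theta\in\widehat\Delta$ and $a\in O_L$ with $a(a-1)\not\equiv0\pmod{\pi_L}$, $M_n(\theta,a)=\sum_{1\le k\le p^{n+1}-1,\,p\nmid k}\frac{a^k}{a^{p^{n+1}}-1}\theta(k)\omega^{-1}(k)\gamma_n(k)\in O_L[\Gamma_n]$; these form a compatible system under restriction, and $M(T,\theta,a)\in\Lambda_L$ denotes the corresponding power series (Mirimanoff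 power series). *)

From HB Require Import structures.
From mathcomp Require Import all_boot all_order all_algebra.
Set Implicit Arguments. Unset Strict Implicit. Unset Printing Implicit Defensive.
Import Order.TTheory GRing.Theory Num.Theory.
Local Open Scope ring_scope.

Definition dvdR (R : comNzRingType) (d x : R) : Prop := exists y : R, x = d * y.

(* O_L for a finite extension L of Q_p, with uniformizer pi, characterised as
   in the paper's setting: a complete discrete valuation ring of
   characteristic 0 with uniformizer pi and finite residue field of
   characteristic p.  (By Cohen's structure theory these are exactly the rings
   of integers of finite extensions of Q_p.) *)
Definition padic_int_ring (p : nat) (R : idomainType) (pi : R) : Prop :=
  [/\
      pi != 0 /\ pi \isn't a GRing.unit,
      (forall x : R, x != 0 -> exists u : R, exists m : nat,
           u \is a GRing.unit /\ x = u * pi ^+ m),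
      (forall m : nat, (m.+1)%:R != 0 :> R),
      dvdR pi (p%:R) /\
      (exists s : seq R, forall x : R, exists2 y, y \in s & dvdR pi (x - y))
    &
      (forall u : nat -> R, (forall m, dvdR (pi ^+ m) (u m.+1 - u m)) ->
         exists x : R, forall m, dvdR (pi ^+ m) (x - u m))].

(* Teichmueller character omega : Z_p^* -> mu_{p-1}(O_L), restricted to the
   integers prime to p (which is all that the statement uses):
   omega(k)^(p-1) = 1 and omega(k) = k mod pi.  These conditions determine
   omega uniquely in O_L (Hensel). *)
Definition teichmuller (p : nat) (R : idomainType) (pi : R) (w : int -> R) : Prop :=
  forall k : int, ~~ (p%:Z %| k)%Z ->
    w k ^+ p.-1 = 1 /\ dvdR pi (w k - k%:~R).

(* Gamma_n is identified with the subgroup {x = 1 mod p} of (Z/p^{n+1})^*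
   via the cyclotomic character.  gamma_n(k) corresponds to <k> mod p^{n+1}
   = k * omega(k)^{-1} mod p^{n+1}, and omega(k) = k^(p^n) mod p^{n+1}. *)
Definition gamma_n (p n k : nat) : 'Z_(p ^ n.+1) :=
  (inZp k * (inZp (k ^ (p ^ n)))^-1)%R.

(* (theta * omega^{-1})(k) with theta = omega^i *)
Definition thw (R : idomainType) (w : int -> R) (i : nat) (k : int) : R :=
  w k ^+ i * (w k)^-1.

(* M_n(theta, a) in O_L[Gamma_n], represented by its coefficient function on
   (Z/p^{n+1}) (supported on the image of Gamma_n). *)
Definition Mn (p : nat) (R : idomainType) (w : int -> R) (i : nat) (a : R)
    (n : nat) : {ffun 'Z_(p ^ n.+1) -> R} :=
  [ffun g => \sum_(1 <= k < p ^ n.+1 | (~~ (p %| k)%N) && (gamma_n p n k == g))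
      a ^+ k / (a ^+ (p ^ n.+1) - 1) * thw w i k%:Z].

(* Reindex the sum defining M_n(theta, a) by k |-> P - k, where P = p^(n+1).  This preserves
   the condition p !| k and the class gamma_n(k), since <-1> = 1.  The
   coefficient transforms as a^(P-k)/(a^P - 1) = -a^(-k)/(a^(-P) - 1), and
   omega(P - k) = omega(-1) omega(k), because both sides are (p-1)-th roots of
   unity congruent to -k modulo pi and such roots are determined by their
   residues (a root of unity of order prime to p that is congruent to 1 is 1).
   That a^P - 1 is invertible follows from a != 1 in the residue field, where
   x |-> x^p is injective. *)

From HB Require Import structures.
From mathcomp Require Import all_boot all_order all_algebra.
From mathcomp Require Import ring.
Import Order.TTheory GRing.Theory Num.Theory.
Set Implicit Arguments. Unset Strict Implicit.
Local Open Scope ring_scope.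

Section IdealDivisibility.
Variables (R : comNzRingType) (d : R).

Lemma dvdR0 : dvdR d 0.
Proof. by exists 0; rewrite mulr0. Qed.

Lemma dvdRD x y : dvdR d x -> dvdR d y -> dvdR d (x + y).
Proof. by move=> [u ->] [v ->]; exists (u + v); rewrite mulrDr. Qed.

Lemma dvdRN x : dvdR d x -> dvdR d (- x).
Proof. by move=> [u ->]; exists (- u); rewrite mulrN. Qed.

Lemma dvdRB x y : dvdR d x -> dvdR d y -> dvdR d (x - y).
Proof. by move=> dx dy; apply/dvdRD/dvdRN. Qed.

Lemma dvdRMl x y : dvdR d x -> dvdR d (y * x).
Proof. by move=> [u ->]; exists (y * u); rewrite mulrCA. Qed.

Lemma dvdRMr x y : dvdR d x -> dvdR d (x * y).
Proof. by move=> dx; rewrite mulrC; apply: dvdRMl. Qed.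

Lemma dvdR_sum (I : Type) (r : seq I) (P : pred I) (F : I -> R) :
  (forall i, P i -> dvdR d (F i)) -> dvdR d (\sum_(i <- r | P i) F i).
Proof. by move=> dF; elim/big_ind: _ => //; [apply: dvdR0 | apply: dvdRD]. Qed.

Lemma dvdR_intr (n : nat) (m : int) :
  dvdR d n%:R -> (n%:Z %| m)%Z -> dvdR d m%:~R.
Proof. by move=> dn /divzK <-; rewrite intrM; apply: dvdRMl. Qed.

End IdealDivisibility.

Lemma dvdR_exprD_prime (R : comNzRingType) (p : nat) (x y : R) : prime p ->
  dvdR p%:R ((x + y) ^+ p - (x ^+ p + y ^+ p)).
Proof.
move=> pr; have [q Dp] : exists q, p = q.+2 by case: p pr => [|[|q]] //; exists q.
rewrite exprDn Dp big_ord_recr big_ord_recl /= subn0 subnn bin0 binn.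
rewrite expr0 mulr1 mul1r !mulr1n.
rewrite (_ : forall u s v : R, u + s + v - (u + v) = s); last by move=> *; ring.
apply: dvdR_sum => i _; rewrite -Dp.
have /divnK <- : (p %| 'C(p, bump 0 i))%N.
  by apply: prime_dvd_bin => //; rewrite Dp /bump /= add1n ltnS ltn_ord.
by rewrite (mulrnA _ ('C(p, bump 0 i) %/ p)); eexists; rewrite mulr_natl.
Qed.

Lemma unity_root_congr1_eq1 (R : idomainType) (d z : R) (m : nat) :
  ~ dvdR d m%:R -> z ^+ m = 1 -> dvdR d (z - 1) -> z = 1.
Proof.
move=> dNm zm1 dz1; apply/eqP; rewrite -subr_eq0.
apply: contraT => z1_neq0; exfalso; apply: dNm.
have sum_eq0 : \sum_(j < m) z ^+ j = 0.
  apply/eqP; move: (subrX1 z m); rewrite zm1 subrr => /esym/eqP.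
  by rewrite mulf_eq0 (negPf z1_neq0).
have -> : m%:R = - \sum_(j < m) (z ^+ j - 1) :> R.
  by rewrite sumrB sum_eq0 sumr_const card_ord sub0r opprK.
by apply/dvdRN/dvdR_sum => j _; rewrite subrX1; apply: dvdRMr.
Qed.

Lemma exprBn_div_subr1 (R : comUnitRingType) (a : R) (m k : nat) :
  a \is a GRing.unit -> a ^+ m - 1 \is a GRing.unit -> (k <= m)%N ->
  a ^+ (m - k) / (a ^+ m - 1) = - (a^-1 ^+ k / (a^-1 ^+ m - 1)).
Proof.
move=> a_unit am_unit le_km.
have -> : a^-1 ^+ m - 1 = - (a ^+ m)^-1 * (a ^+ m - 1).
  by rewrite exprVn mulNr mulrBr mulVr ?unitrX // mulr1 opprB.
rewrite invrM ?unitrN ?unitrV ?unitrX // invrN invrK exprB // exprVn.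
by rewrite !mulrN opprK [RHS]mulrA [RHS]mulrC [RHS]mulrA.
Qed.

Lemma gamma_n_subn (p n k : nat) : prime p -> odd p -> (k <= p ^ n.+1)%N ->
  gamma_n p n (p ^ n.+1 - k) = gamma_n p n k.
Proof.
move=> pr oddp le_kP.
have P_gt1 : (1 < p ^ n.+1)%N by rewrite -{1}(expn0 p) ltn_exp2l ?prime_gt1.
rewrite /gamma_n -!Zp_nat !natrX natrB // pchar_Zp // sub0r exprNn.
by rewrite -signr_odd oddX oddp orbT expr1 mulN1r invrN mulrNN.
Qed.

Section PadicIntegers.
Variables (p : nat) (R : idomainType) (pi : R).
Hypothesis HR : padic_int_ring p pi.

Lemma dvdR_char : dvdR pi p%:R.
Proof. by case: HR => _ _ _ []. Qed.

Lemma unit_ndvdR x : x \is a GRing.unit -> ~ dvdR pi x.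
Proof.
case: HR => [[_ pi_Nunit] _ _ _ _] x_unit [y Dx]; move/negP: pi_Nunit; apply.
by apply/unitrPr; exists (y / x); rewrite mulrA -Dx divrr.
Qed.

Lemma ndvdR_unit x : ~ dvdR pi x -> x \is a GRing.unit.
Proof.
case: HR => _ dvr _ _ _ xN.
have x_neq0 : x != 0 by apply: contra_not_neq xN => ->; apply: dvdR0.
have [u [[|m] [u_unit Dx]]] := dvr x x_neq0; first by rewrite Dx expr0 mulr1.
by case: xN; exists (u * pi ^+ m); rewrite Dx exprS mulrCA.
Qed.

Hypotheses (pr : prime p) (oddp : odd p).

(* In the residue field, [b ^ p - 1 = (b - 1) ^ p]. *)
Lemma ndvdR_expr_prime_subr1 b : ~ dvdR pi (b - 1) -> ~ dvdR pi (b ^+ p - 1).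
Proof.
move=> b1N dbp; apply: (unit_ndvdR (unitrX p (ndvdR_unit b1N))).
have [z Dz] := dvdR_exprD_prime b (-1) pr.
move: Dz; rewrite -signr_odd oddp expr1 => Dz.
have -> : (b - 1) ^+ p = (b ^+ p - 1) + p%:R * z by rewrite -Dz [RHS]addrC subrK.
exact: dvdRD dbp (dvdRMr z dvdR_char).
Qed.

Lemma ndvdR_expr_primeX_subr1 b n :
  ~ dvdR pi (b - 1) -> ~ dvdR pi (b ^+ (p ^ n) - 1).
Proof.
move=> b1N; elim: n => [|n IHn]; first by rewrite expn0 expr1.
by rewrite expnSr exprM; apply: ndvdR_expr_prime_subr1.
Qed.

Variable w : int -> R.
Hypothesis Hw : teichmuller p pi w.

Lemma teichmuller_unit k : ~~ (p%:Z %| k)%Z -> w k \is a GRing.unit.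
Proof.
have p1_gt0 : (0 < p.-1)%N by rewrite -subn1 subn_gt0 prime_gt1.
by case/Hw => wk1 _; rewrite -(unitrX_pos _ p1_gt0) wk1 unitr1.
Qed.

Lemma teichmuller_unique k x : ~~ (p%:Z %| k)%Z ->
  x ^+ p.-1 = 1 -> dvdR pi (x - k%:~R) -> w k = x.
Proof.
move=> pNk x1 dx; have [wk1 dwk] := Hw pNk; have wk_unit := teichmuller_unit pNk.
suff : x / w k = 1 by move/(canRL (divrK wk_unit)); rewrite mul1r.
apply: (@unity_root_congr1_eq1 _ pi _ p.-1).
- move=> dp1; apply: (unit_ndvdR (unitr1 R)).
  have -> : 1 = p%:R - p.-1%:R :> R.
    by rewrite -{1}(prednK (prime_gt0 pr)) -addn1 natrD addrAC subrr add0r.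
  exact: dvdRB dvdR_char dp1.
- by rewrite exprMn exprVn x1 wk1 invr1 mulr1.
- have -> : x / w k - 1 = ((x - k%:~R) - (w k - k%:~R)) / w k.
    by rewrite opprB addrA subrK mulrBl divrr.
  exact: dvdRMr (dvdRB dx dwk).
Qed.

Lemma teichmuller_congr k l : ~~ (p%:Z %| k)%Z -> ~~ (p%:Z %| l)%Z ->
  (p%:Z %| k - l)%Z -> w k = w l.
Proof.
move=> pNk pNl pkl; have [wl1 dwl] := Hw pNl.
apply: teichmuller_unique pNk wl1 _.
have -> : w l - k%:~R = (w l - l%:~R) - (k - l)%:~R.
  by rewrite intrB opprB addrA subrK.
exact: dvdRB dwl (dvdR_intr dvdR_char pkl).
Qed.

Lemma teichmullerM k l : ~~ (p%:Z %| k)%Z -> ~~ (p%:Z %| l)%Z ->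
  w (k * l) = w k * w l.
Proof.
move=> pNk pNl; have [wk1 dwk] := Hw pNk; have [wl1 dwl] := Hw pNl.
apply: teichmuller_unique.
- by move: pNk pNl; rewrite !dvdzE abszM Euclid_dvdM // negb_or => -> ->.
- by rewrite exprMn wk1 wl1 mulr1.
- have -> : w k * w l - (k * l)%:~R
      = (w k - k%:~R) * w l + k%:~R * (w l - l%:~R) by rewrite intrM; ring.
  exact: dvdRD (dvdRMr _ dwk) (dvdRMl _ dwl).
Qed.

Let p_ndvdN1 : ~~ (p%:Z %| -1)%Z.
Proof. by rewrite dvdzE dvdn1 neq_ltn prime_gt1 ?orbT. Qed.

Lemma teichmuller_subn (m k : nat) : (p %| m)%N -> ~~ (p %| k)%N ->
  (k <= m)%N -> w (m - k)%N = w (-1) * w k.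
Proof.
move=> pm pNk le_km; rewrite -teichmullerM //; apply: teichmuller_congr.
- by rewrite dvdzE /= dvdn_subr.
- by rewrite mulN1r dvdzE abszN.
- by rewrite mulN1r opprK -subzn // subrK dvdzE.
Qed.

Lemma thw_subn (i m k : nat) : (p %| m)%N -> ~~ (p %| k)%N -> (k <= m)%N ->
  thw w i (m - k)%N = thw w i (-1) * thw w i k.
Proof.
move=> pm pNk le_km.
by rewrite /thw teichmuller_subn // exprMn invrM ?teichmuller_unit //; ring.
Qed.

End PadicIntegers.

Unset Implicit Arguments.

Theorem lemma3p2 (p : nat) (Hp : prime p) (H5 : (5 <= p)%N)
    (R : idomainType) (pi : R) (HR : padic_int_ring p pi)
    (w : int -> R) (Hw : teichmuller p pi w)
    (i : 'I_(p.-1)) (a : R) (Ha : ~ dvdR pi (a * (a - 1))) :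
  forall (n : nat) (g : 'Z_(p ^ n.+1)),
    Mn p w i a n g = - (w (-1) ^+ i * (w (-1))^-1) * Mn p w i a^-1 n g.
Proof.
move=> n g; set P := (p ^ n.+1)%N.
have oddp : odd p by case: (even_prime Hp) => // p2; rewrite p2 in H5.
have pP : (p %| P)%N by rewrite /P expnS dvdn_mulr.
have a_unit : a \is a GRing.unit.
  by apply: (ndvdR_unit HR) => da; apply: Ha; apply: dvdRMr.
have aP_unit : a ^+ P - 1 \is a GRing.unit.
  apply: (ndvdR_unit HR); apply: ndvdR_expr_primeX_subr1 => // da1.
  by apply: Ha; apply: dvdRMl.
rewrite !ffunE -/P mulr_sumr big_nat_rev add1n.
apply: congr_big_nat => // k.
- move=> /andP[_ /ltnW le_kP].
  by rewrite subSS dvdn_subr ?gamma_n_subn.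
- case/and3P=> /andP[+ _] _ /ltnW le_kP.
  rewrite subSS dvdn_subr // => pNk.
  rewrite exprBn_div_subr1 // (thw_subn HR Hp Hw) //.
  by rewrite !mulNr mulrCA.
Qed.
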